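(* Let $a,b,k$ be positive integers. Define $a_1=a$, $a_2=b$, and $a_n=ka_{n-1}+a_{n-2}$ for $n\ge 3$. Let $(x_n)_{n\ge1}$ be the sequence $1,1,1,2,2,2,1,1,1,2,2,2,\ldots$ and $(y_n)_{n\ge1}$ the sequence $2,2,2,1,1,1,2,2,2,1,1,1,\ldots$ (blocks of three, alternating). (1) If $k$ is even, then the sequence $(\Gamma(a_n,a_{n+1}))_{n\ge1}$ is constant. (2) If $k$ is odd: (a) if $a$ and $b$ are both odd, then $(\Gamma(a_n,a_{n+1}))_{n\ge 3}$ equals $(x_n)_{n\ge1}$ or $(y_n)_{n\ge1}$; (b) if $a$ is odd and $b$ is even, then $(\Gamma(a_n,a_{n+1}))_{n\ge 2}$ equals $(x_n)_{n\ge1}$ or $(y_n)_{n\ge1}$; (c) if $a$ is even and $b$ is odd, then $(\Gamma(a_n,a_{n+1}))_{n\ge 1}$ equals $(x_n)_{n\ge1}$ or $(y_n)_{n\ge1}$.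
   Context: For relatively prime positive integers $p,q$, exactly one of the equations $px+qy=\frac{(p-1)(q-1)}{2}$ (Equation 1) and $px+qy+1=\frac{(p-1)(q-1)}{2}$ (Equation 2) has a solution in nonnegative integers $(x,y)$. For positive integers $a,b$ with $d=\gcd(a,b)$, $\Gamma(a,b)=1$ if Equation 1 with $(p,q)=(a/d,b/d)$ has a nonnegative integer solution, and $\Gamma(a,b)=2$ otherwise. A sequence indexed from $n\ge m$ ''equals'' $(x_n)_{n\ge1}$ means its $j$-th term (the one with index $n=m+j-1$) equals $x_j$ for all $j\ge1$. *)

From mathcomp Require Import all_boot.
Set Implicit Arguments. Unset Strict Implicit. Unset Printing Implicit Defensive.

Definition eq1_solvable (p q : nat) : Prop :=
  exists x y : nat, p * x + q * y = ((p - 1) * (q - 1)) %/ 2.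

(* Boolean version of eq1_solvable: for p, q >= 1 any solution has x, y <= target,
   so a bounded search is exact; equivalence proved in eq1_solvableP below. *)
Definition eq1_solvableb (p q : nat) : bool :=
  let c := ((p - 1) * (q - 1)) %/ 2 in
  [exists x : 'I_c.+1, exists y : 'I_c.+1, p * x + q * y == c].

Definition Gamma (a b : nat) : nat :=
  let d := gcdn a b in
  if eq1_solvableb (a %/ d) (b %/ d) then 1 else 2.

(* 0-indexed helper: rec a b k 0 = a, rec 1 = b, rec (n+2) = k*rec(n+1) + rec n *)
Fixpoint rec_aux (a b k n : nat) {struct n} : nat * nat :=
  match n with
  | 0 => (a, b)
  | m.+1 => let: (u, v) := rec_aux a b k m in (v, k * v + u)
  end.

Definition aseq (a b k n : nat) : nat := (rec_aux a b k n.-1).1.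

Definition xseq (j : nat) : nat := if odd ((j.-1) %/ 3) then 2 else 1.
Definition yseq (j : nat) : nat := if odd ((j.-1) %/ 3) then 1 else 2.

Lemma eq1_solvableP p q : 0 < p -> 0 < q ->
  reflect (eq1_solvable p q) (eq1_solvableb p q).
Proof.
move=> hp hq; rewrite /eq1_solvableb /eq1_solvable.
set c := _ %/ 2.
apply: (iffP existsP).
  by case=> x /existsP [y /eqP e]; exists x, y.
case=> x [y e].
have hx : x < c.+1 by rewrite ltnS -e; apply: leq_trans (leq_addr _ _); rewrite leq_pmull.
have hy : y < c.+1 by rewrite ltnS -e; apply: leq_trans (leq_addl _ _); rewrite leq_pmull.
by exists (Ordinal hx); apply/existsP; exists (Ordinal hy); rewrite e.
Qed.

Lemma aseq_1 a b k : aseq a b k 1 = a. Proof. by []. Qed.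
Lemma aseq_2 a b k : aseq a b k 2 = b. Proof. by []. Qed.
Lemma aseq_rec a b k n : 3 <= n ->
  aseq a b k n = k * aseq a b k n.-1 + aseq a b k n.-2.
Proof.
case: n => [|[|[|n]]] //= _; rewrite /aseq /=.
by case: (rec_aux a b k n) => u v /=.
Qed.

From mathcomp Require Import all_boot zify.

(* For coprime p, q the equation p u + q w = p q + 1 has exactly one solution
   in positive integers, and substituting u = 2x + 1, w = 2y + 1 shows that
   Equation 1 is solvable iff this u and w are both odd.  Replacing q by k p + q
   moves the solution to (u + k (p - w), w), which changes the parity of u iff
   k is odd and p is even (w even forces p odd).  Hence, with d = gcd(a, b),
   Gamma(a_(n+1), a_(n+2)) differs from Gamma(a_n, a_(n+1)) exactly when k is
   odd and a_(n+1)/d is even; for odd k the reduced terms a_n/d follow the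
   parity pattern even, odd, odd from the first even one on, whence the blocks
   of three. *)

Set Implicit Arguments.
Unset Strict Implicit.
Unset Printing Implicit Defensive.

Lemma eq1_solvable_oddE p q : 0 < p -> 0 < q -> odd p || odd q ->
  eq1_solvable p q <-> exists u w, [/\ odd u, odd w & p * u + q * w = p * q + 1].
Proof.
case: p q => [|p] [|q] // _ _ odd_pq.
have [c pq2] : exists c, p * q = c.*2.
  exists (p * q)./2; rewrite -[LHS]odd_double_half oddM.
  by move: odd_pq; rewrite /= -negb_and => /negbTE ->.
rewrite /eq1_solvable !subn1 /= pq2 -muln2 mulnK //.
split=> [[x [y e]] | [u [w [ou ow e]]]].
  by exists x.*2.+1, y.*2.+1; rewrite /= !odd_double; split=> //; lia.
exists u./2, w./2; move: e.
rewrite -{1}[u]odd_double_half -{1}[w]odd_double_half ou ow /=.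
lia.
Qed.

Lemma coprime_pos_sol p q : 0 < q -> coprime p q ->
  exists u w, [/\ 0 < u, 0 < w & p * u + q * w = p * q + 1].
Proof.
move=> q_gt0 cpq; have [a a_lt_q] := Bezoutl p q_gt0.
rewrite gcdnC (eqP cpq) => /dvdnP [s e].
exists (q - a), s; split; first by rewrite subn_gt0.
  by case: s e; rewrite ?muln0 ?addn1.
rewrite mulnBr; have : p * a <= p * q by rewrite leq_mul2l ltnW ?orbT.
lia.
Qed.

Lemma coprime_pos_sol_uniq p q u1 w1 u2 w2 : 0 < p -> 0 < q -> coprime p q ->
  0 < u1 -> 0 < w1 -> p * u1 + q * w1 = p * q + 1 ->
  0 < u2 -> 0 < w2 -> p * u2 + q * w2 = p * q + 1 -> (u1, w1) = (u2, w2).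
Proof.
move=> p_gt0 q_gt0 cpq; wlog u12 : u1 w1 u2 w2 / u1 <= u2.
  move=> W u1_gt0 w1_gt0 e1 u2_gt0 w2_gt0 e2.
  by case: (leqP u1 u2) => [u12 | /ltnW u21]; [exact: W | apply/esym/W].
move=> u1_gt0 _ e1 _ w2_gt0 e2.
have u2_le_q : u2 <= q by rewrite -(leq_pmul2l p_gt0); nia.
have /dvdn_leq q_le : q %| u2 - u1.
  have cqp : coprime q p by rewrite coprime_sym.
  rewrite -(Gauss_dvdr _ cqp) mulnBr.
  by apply/dvdnP; exists (w1 - w2); nia.
have u1E : u1 = u2 by lia.
by move: e1; rewrite u1E -e2 => /addnI /eqP; rewrite eqn_pmul2l // => /eqP ->.
Qed.

Lemma coprime_odd p q : coprime p q -> odd p || odd q.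
Proof.
apply: contraLR; rewrite negb_or => /andP [ep eq].
apply/negP => /eqP cop.
by have := @dvdn_gcd 2 p q; rewrite cop !dvdn2 ep eq.
Qed.

Lemma eq1_solvableb_sol p q u w : 0 < p -> 0 < q -> coprime p q ->
  0 < u -> 0 < w -> p * u + q * w = p * q + 1 ->
  eq1_solvableb p q = odd u && odd w.
Proof.
move=> p_gt0 q_gt0 cpq u_gt0 w_gt0 e.
have oddE := eq1_solvable_oddE p_gt0 q_gt0 (coprime_odd cpq).
apply/(eq1_solvableP p_gt0 q_gt0)/andP => [/oddE [u' [w' [ou' ow' e']]] | [ou ow]].
  have [-> ->] := coprime_pos_sol_uniq p_gt0 q_gt0 cpq u_gt0 w_gt0 e
    (odd_gt0 ou') (odd_gt0 ow') e'.
  by split.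
by apply/oddE; exists u, w.
Qed.

Lemma eq1_solvableb_sym p q : 0 < p -> 0 < q -> coprime p q ->
  eq1_solvableb p q = eq1_solvableb q p.
Proof.
move=> p_gt0 q_gt0 cpq; have [u [w [u_gt0 w_gt0 e]]] := coprime_pos_sol q_gt0 cpq.
rewrite (eq1_solvableb_sol p_gt0 q_gt0 cpq u_gt0 w_gt0 e) andbC.
by apply/esym/eq1_solvableb_sol; rewrite // 1?coprime_sym // addnC [q * p]mulnC.
Qed.

Lemma eq1_solvableb_shift p q k : 0 < p -> 0 < q -> coprime p q ->
  eq1_solvableb p (k * p + q) = (odd k && ~~ odd p) (+) eq1_solvableb p q.
Proof.
move=> p_gt0 q_gt0 cpq; have [u [w [u_gt0 w_gt0 e]]] := coprime_pos_sol q_gt0 cpq.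
have w_le_p : w <= p by rewrite -(leq_pmul2l q_gt0); nia.
have e' : p * (u + k * (p - w)) + (k * p + q) * w = p * (k * p + q) + 1.
  by rewrite mulnBr !mulnDr; nia.
rewrite (eq1_solvableb_sol p_gt0 q_gt0 cpq u_gt0 w_gt0 e).
have cpq' : coprime p (k * p + q) by rewrite /coprime gcdnMDl.
rewrite (eq1_solvableb_sol p_gt0 _ cpq' _ w_gt0 e') ?addn_gt0 ?q_gt0 ?u_gt0 ?orbT //.
rewrite oddD oddM oddB //; case: (boolP (odd w)) => ow.
  by rewrite addbT !andbT addbC.
suff -> : odd p by rewrite !andbF.
by move: (congr1 odd e); rewrite !oddD !oddM (negbTE ow) andbF addbF; case: (odd p).
Qed.

Lemma Gamma_coprimeM d p q : 0 < d -> coprime p q ->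
  Gamma (d * p) (d * q) = if eq1_solvableb p q then 1 else 2.
Proof. by move=> d_gt0 cpq; rewrite /Gamma -muln_gcdr (eqP cpq) muln1 !mulKn. Qed.

Lemma coprime_decomp a b : 0 < a -> 0 < b -> exists2 d, 0 < d &
  exists a' b', [/\ 0 < a', 0 < b', coprime a' b', a = d * a' & b = d * b'].
Proof.
move=> a_gt0 b_gt0; set d := gcdn a b; have d_gt0 : 0 < d by rewrite gcdn_gt0 a_gt0.
have dK m : d %| m -> m = d * (m %/ d) by move=> dvd_m; rewrite mulnC divnK.
have [aE bE] := (dK a (dvdn_gcdl a b), dK b (dvdn_gcdr a b)).
exists d => //; exists (a %/ d), (b %/ d); split=> //.
- by rewrite divn_gt0 // dvdn_leq ?dvdn_gcdl.
- by rewrite divn_gt0 // dvdn_leq ?dvdn_gcdr.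
by rewrite /coprime -(eqn_pmul2l d_gt0) muln_gcdr -aE -bE muln1.
Qed.

Section Recurrence.

Variables a b k : nat.

Lemma aseqSSS n : aseq a b k n.+3 = k * aseq a b k n.+2 + aseq a b k n.+1.
Proof. exact: aseq_rec. Qed.

Lemma aseq_gt0 n : 0 < a -> 0 < b -> 0 < aseq a b k n.+1.
Proof.
move=> a_gt0 b_gt0; suff [] : 0 < aseq a b k n.+1 /\ 0 < aseq a b k n.+2 by [].
by elim: n => [|n [pos1 pos2]] //; rewrite aseqSSS addn_gt0 pos1 orbT.
Qed.

Lemma coprime_aseq n : coprime a b -> coprime (aseq a b k n.+1) (aseq a b k n.+2).
Proof.
by move=> cab; elim: n => // n IH; rewrite aseqSSS /coprime gcdnMDl gcdnC.
Qed.

Lemma aseqM d n : aseq (d * a) (d * b) k n = d * aseq a b k n.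
Proof.
suff recM m : rec_aux (d * a) (d * b) k m =
    (d * (rec_aux a b k m).1, d * (rec_aux a b k m).2) by rewrite /aseq recM.
elim: m => //= m; case: (rec_aux a b k m) => u v -> /=.
by rewrite mulnDr mulnCA.
Qed.

Lemma odd_aseq_period s : odd k -> ~~ odd (aseq a b k s.+1) -> odd (aseq a b k s.+2) ->
  forall i, odd (aseq a b k (i + s).+1) = (i %% 3 != 0).
Proof.
move=> ok e1 o2; elim/ltn_ind => -[|[|[|i]]] IH; rewrite ?add0n ?add1n ?(negbTE e1) //.
  by rewrite aseqSSS oddD oddM ok o2 (negbTE e1).
rewrite !addSn !aseqSSS !(oddD, oddM) ok /=.
by rewrite addbAC addbb /= IH //; lia.
Qed.

End Recurrence.

Section Eq1Flags.

Variables a b k : nat.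
Hypotheses (a_gt0 : 0 < a) (b_gt0 : 0 < b) (cab : coprime a b).

Definition eq1_at n := eq1_solvableb (aseq a b k n.+1) (aseq a b k n.+2).

Lemma eq1_atS n : eq1_at n.+1 = (odd k && ~~ odd (aseq a b k n.+2)) (+) eq1_at n.
Proof.
have pos m : 0 < aseq a b k m.+1 by exact: aseq_gt0.
have cop m : coprime (aseq a b k m.+1) (aseq a b k m.+2) by exact: coprime_aseq.
rewrite /eq1_at aseqSSS eq1_solvableb_shift // 1?coprime_sym //.
by rewrite eq1_solvableb_sym // coprime_sym.
Qed.

Lemma eq1_at_even n : ~~ odd k -> eq1_at n = eq1_at 0.
Proof. by move=> ek; elim: n => // n IH; rewrite eq1_atS (negbTE ek). Qed.

Lemma eq1_at_odd s : odd k -> ~~ odd (aseq a b k s.+1) -> odd (aseq a b k s.+2) ->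
  forall i, eq1_at (i.+1 + s) = (i.+1 %% 3 == 0) (+) eq1_at (i + s).
Proof.
move=> ok e1 o2 i; rewrite addSn eq1_atS ok -addSn.
by rewrite (odd_aseq_period ok e1 o2) negbK.
Qed.

Lemma Gamma_aseq d n : 0 < d ->
  Gamma (aseq (d * a) (d * b) k n.+1) (aseq (d * a) (d * b) k n.+2) =
  if eq1_at n then 1 else 2.
Proof. by move=> d_gt0; rewrite !aseqM Gamma_coprimeM ?coprime_aseq. Qed.

End Eq1Flags.

Lemma xseq_yseq_of_flips (f : nat -> bool) (G : nat -> nat) :
  (forall i, f i.+1 = (i.+1 %% 3 == 0) (+) f i) ->
  (forall i, G i.+1 = if f i then 1 else 2) ->
  (forall j, 1 <= j -> G j = xseq j) \/ (forall j, 1 <= j -> G j = yseq j).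
Proof.
move=> fS GE; have fE i : f i = odd (i %/ 3) (+) f 0.
  by elim: i => // i IH; rewrite fS IH divnS // oddD oddb addbA.
by case: (f 0) (fE) => [|] fE'; [left | right] => -[|i] // _;
  rewrite GE fE' /xseq /yseq /=; case: odd.
Qed.

Lemma Gamma_aseq_even a b k n : 0 < a -> 0 < b -> ~~ odd k ->
  Gamma (aseq a b k n.+1) (aseq a b k n.+2) = Gamma (aseq a b k 1) (aseq a b k 2).
Proof.
move=> a_gt0 b_gt0 ek.
have [d d_gt0 [a' [b' [a'_gt0 b'_gt0 cab -> ->]]]] := coprime_decomp a_gt0 b_gt0.
by rewrite !Gamma_aseq // eq1_at_even.
Qed.

Lemma Gamma_aseq_odd a b k s : 0 < a -> 0 < b -> odd k ->
  ~~ odd (aseq a b k s.+1) -> odd (aseq a b k s.+2) ->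
  (forall j, 1 <= j -> Gamma (aseq a b k (j + s)) (aseq a b k (j + s.+1)) = xseq j) \/
  (forall j, 1 <= j -> Gamma (aseq a b k (j + s)) (aseq a b k (j + s.+1)) = yseq j).
Proof.
move=> a_gt0 b_gt0 ok.
have [d d_gt0 [a' [b' [a'_gt0 b'_gt0 cab -> ->]]]] := coprime_decomp a_gt0 b_gt0.
rewrite !aseqM !oddM => e1 /andP [od o2]; rewrite od /= in e1.
apply: (@xseq_yseq_of_flips (fun i => eq1_at a' b' k (i + s))); first exact: eq1_at_odd.
by move=> i; rewrite addSn addnS Gamma_aseq.
Qed.

Theorem corollary5p3 (a b k : nat) (ha : 0 < a) (hb : 0 < b) (hk : 0 < k) :
  (~~ odd k ->
     forall n, 1 <= n -> Gamma (aseq a b k n) (aseq a b k n.+1)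
                        = Gamma (aseq a b k 1) (aseq a b k 2)) /\
  (odd k ->
     (odd a -> odd b ->
        (forall j, 1 <= j -> Gamma (aseq a b k (j + 2)) (aseq a b k (j + 3)) = xseq j) \/
        (forall j, 1 <= j -> Gamma (aseq a b k (j + 2)) (aseq a b k (j + 3)) = yseq j)) /\
     (odd a -> ~~ odd b ->
        (forall j, 1 <= j -> Gamma (aseq a b k (j + 1)) (aseq a b k (j + 2)) = xseq j) \/
        (forall j, 1 <= j -> Gamma (aseq a b k (j + 1)) (aseq a b k (j + 2)) = yseq j)) /\
     (~~ odd a -> odd b ->
        (forall j, 1 <= j -> Gamma (aseq a b k j) (aseq a b k j.+1) = xseq j) \/
        (forall j, 1 <= j -> Gamma (aseq a b k j) (aseq a b k j.+1) = yseq j))).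
Proof.
split=> [ek [|n] // _ | ok]; first exact: Gamma_aseq_even.
have aseq3 : aseq a b k 3 = k * b + a by [].
have aseq4 : aseq a b k 4 = k * (k * b + a) + b by [].
split; [|split] => [oa ob | oa eb | ea ob].
- by apply: Gamma_aseq_odd; rewrite // ?aseq3 ?aseq4 !(oddD, oddM) ok oa ob.
- by apply: Gamma_aseq_odd; rewrite // aseq3 !(oddD, oddM) ok oa (negbTE eb).
- have [] := Gamma_aseq_odd (s := 0) ha hb ok ea ob => G; [left | right] => j /G;
    by rewrite addn0 addn1.
Qed.
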